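(* Let $n\ge 2$ and let $\gamma:I\to\mathbb{R}^2$ ($0\in I$) be a front without inflection points. If $\gamma$ is $\mathcal{A}$-equivalent at $t=0$ to $Cusp_{(n,n+1)}(t)=(t^n,t^{n+1})$, then $t=0$ is a singular point of $Ev^{k}(\gamma)$ for every $k=1,\dots,n-2$ and a regular point of $Ev^{n-1}(\gamma)$.
   Context: A $C^\infty$ curve $\gamma:I\to\mathbb{R}^2$ is a front if there is a $C^\infty$ map $\nu:I\to S^1$ with $\gamma'(t)\cdot\nu(t)=0$ for all $t$ and $(\gamma,\nu):I\to\mathbb{R}^2\times S^1$ an immersion (a Legendre immersion). A point $t$ is singular for a curve $c$ if $c'(t)=\mathbf{0}$, regular otherwise. Let $M$ denote anticlockwise rotation by $\pi/2$, $\mu=M(\nu)$, $\ell(t)=\nu'(t)\cdot\mu(t)$ and $\beta(t)=\gamma'(t)\cdot\mu(t)$. The front has no inflection points if $\ell(t)\neq0$ for all $t\in I$. The evolute is $Ev(\gamma)(t)=\gamma(t)-\frac{\beta(t)}{\ell(t)}\nu(t)$; $(Ev(\gamma),\mu)$ is again a Legendre immersion without inflection points, with curvature $(\ell,\frac{d}{dt}(\beta/\ell))$. Iteratively, with $\beta_0=\beta$, $\beta_k=\frac{d}{dt}(\beta_{k-1}/\ell)$, $Ev^0(\gamma)=\gamma$ and $Ev^{k}(\gamma)=Ev^{k-1}(\gamma)-\frac{\beta_{k-1}}{\ell}M^{k-1}(\nu)$, where $(Ev^k(\gamma),M^k(\nu))$ is a Legendre immersion with curvature $(\ell,\beta_k)$.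 $\mathcal{A}$-equivalence means equivalence via $C^\infty$ diffeomorphism germs of source and target. *)

From Stdlib Require Import Reals.
From Coquelicot Require Import Coquelicot.
Open Scope R_scope.

Definition smooth_on (U : R -> Prop) (f : R -> R) : Prop :=
  forall (n : nat) (x : R), U x -> ex_derive (Derive_n f n) x.

Definition d1 (f : R * R -> R) : R * R -> R :=
  fun p => Derive (fun s => f (s, snd p)) (fst p).
Definition d2 (f : R * R -> R) : R * R -> R :=
  fun p => Derive (fun s => f (fst p, s)) (snd p).

Fixpoint Ck2 (k : nat) (f : R * R -> R) (U : R * R -> Prop) : Prop :=
  match k with
  | O => forall p, U p -> continuous f p
  | S k' => (forall p, U p -> continuous f p) /\
            (forall p, U p -> ex_derive (fun s => f (s, snd p)) (fst p)
                              /\ ex_derive (fun s => f (fst p, s)) (snd p)) /\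
            Ck2 k' (d1 f) U /\ Ck2 k' (d2 f) U
  end.

Definition smooth2_on (U : R * R -> Prop) (f : R * R -> R) : Prop :=
  forall k, Ck2 k f U.

Definition smooth22_on (U : R * R -> Prop) (F : R * R -> R * R) : Prop :=
  smooth2_on U (fun p => fst (F p)) /\ smooth2_on U (fun p => snd (F p)).

Definition ival (a b : R) : R -> Prop := fun t => a < t < b.
Definition sq (p : R * R) (d : R) : R * R -> Prop :=
  fun q => Rabs (fst q - fst p) < d /\ Rabs (snd q - snd p) < d.

Definition dot (u v : R * R) : R := fst u * fst v + snd u * snd v.
Definition Mrot (v : R * R) : R * R := (- snd v, fst v).
Fixpoint Mpow (k : nat) (v : R * R) : R * R :=
  match k with O => v | S k' => Mrot (Mpow k' v) end.

Definition dcurve (c : R -> R * R) (t : R) : R * R :=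
  (Derive (fun s => fst (c s)) t, Derive (fun s => snd (c s)) t).

Definition singular_point (c : R -> R * R) (t : R) : Prop :=
  dcurve c t = (0, 0).
Definition regular_point (c : R -> R * R) (t : R) : Prop :=
  dcurve c t <> (0, 0).

Definition legendre_immersion (a b : R) (gamma nu : R -> R * R) : Prop :=
  smooth_on (ival a b) (fun t => fst (gamma t)) /\
  smooth_on (ival a b) (fun t => snd (gamma t)) /\
  smooth_on (ival a b) (fun t => fst (nu t)) /\
  smooth_on (ival a b) (fun t => snd (nu t)) /\
  (forall t, ival a b t -> dot (nu t) (nu t) = 1) /\
  (forall t, ival a b t -> dot (dcurve gamma t) (nu t) = 0) /\
  (forall t, ival a b t -> (dcurve gamma t, dcurve nu t) <> ((0, 0), (0, 0))).

Definition mu_of (nu : R -> R * R) : R -> R * R := fun t => Mrot (nu t).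
Definition ell (nu : R -> R * R) : R -> R :=
  fun t => dot (dcurve nu t) (mu_of nu t).
Definition beta0 (gamma nu : R -> R * R) : R -> R :=
  fun t => dot (dcurve gamma t) (mu_of nu t).

Fixpoint betak (gamma nu : R -> R * R) (k : nat) : R -> R :=
  match k with
  | O => beta0 gamma nu
  | S k' => fun t => Derive (fun s => betak gamma nu k' s / ell nu s) t
  end.

Fixpoint Ev (gamma nu : R -> R * R) (k : nat) : R -> R * R :=
  match k with
  | O => gamma
  | S k' => fun t =>
      let c := betak gamma nu k' t / ell nu t in
      let v := Mpow k' (nu t) in
      (fst (Ev gamma nu k' t) - c * fst v, snd (Ev gamma nu k' t) - c * snd v)
  end.

Definition Cusp (n : nat) (t : R) : R * R := (t ^ n, t ^ (S n)).

(* The germ of gamma at 0 (defined on I = (a,b)) is A-equivalent to the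
   germ of g at 0 : there are diffeomorphism germs phi : (R,0) -> (R,0)
   and psi : (R^2, gamma 0) -> (R^2, g 0) with psi o gamma = g o phi
   near 0.  A diffeomorphism germ is represented by a map smooth near the
   base point having a smooth two-sided local inverse. *)
Definition A_equivalent_at0 (a b : R) (gamma g : R -> R * R) : Prop :=
  exists (d : R) (phi phiinv : R -> R) (psi chi : R * R -> R * R),
    0 < d /\
    phi 0 = 0 /\
    smooth_on (ival (- d) d) phi /\ smooth_on (ival (- d) d) phiinv /\
    (forall t, ival (- d) d t -> phiinv (phi t) = t) /\
    (forall s, ival (- d) d s -> phi (phiinv s) = s) /\
    psi (gamma 0) = g 0 /\
    smooth22_on (sq (gamma 0) d) psi /\ smooth22_on (sq (g 0) d) chi /\
    (forall x, sq (gamma 0) d x -> chi (psi x) = x) /\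
    (forall y, sq (g 0) d y -> psi (chi y) = y) /\
    (forall t, ival a b t -> ival (- d) d t -> psi (gamma t) = g (phi t)).

(* Along a front, gamma' = beta mu and, inductively, (Ev^k gamma)' = beta_k M^(k+1)(nu), so
   t = 0 is a singular point of Ev^k gamma exactly when beta_k(0) = 0.  Write the
   A-equivalence as psi o gamma = Cusp o phi.  Differentiating gives
   beta(t) Dpsi(gamma t) mu(t) = (n phi' phi^(n-1), (n+1) phi' phi^n); as phi'(0) <> 0 and
   Dpsi(gamma 0) mu(0) <> 0, beta vanishes to order exactly n-1 at 0.  Dividing by the
   nonvanishing ell and differentiating lowers the order by one, so beta_k vanishes to order
   exactly n-1-k: beta_k(0) = 0 for k <= n-2 and beta_(n-1)(0) <> 0. *)

From Pilot Require Import Defs.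
From Stdlib Require Import Reals Lra Lia Factorial.
From Coquelicot Require Import Coquelicot.
Open Scope R_scope.

Lemma open_ival (a b : R) : open (ival a b).
Proof. exact (open_and _ _ (open_gt a) (open_lt b)). Qed.

Lemma Derive_n_Derive (f : R -> R) (m : nat) (x : R) :
  Derive_n (Derive f) m x = Derive_n f (S m) x.
Proof.
  revert x; induction m as [|m IHm]; intros x; [reflexivity|].
  simpl; apply Derive_ext; intros; apply IHm.
Qed.

Section SmoothOn.

Variable U : R -> Prop.
Hypothesis HU : open U.

Definition Cn_on (n : nat) (f : R -> R) : Prop :=
  forall m, (m <= n)%nat -> forall x, U x -> ex_derive (Derive_n f m) x.

Lemma Cn_on_ext (n : nat) (f g : R -> R) : (forall x, U x -> f x = g x) -> Cn_on n f -> Cn_on n g.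
Proof.
  intros Hfg Hf m Hm x Hx.
  apply ex_derive_ext_loc with (Derive_n f m); [|now apply Hf].
  apply (filter_imp U); [|exact (HU x Hx)].
  intros y Hy; apply Derive_n_ext_loc.
  apply (filter_imp U); [exact Hfg|exact (HU y Hy)].
Qed.

Lemma Cn_on_0 (f : R -> R) : Cn_on 0 f <-> (forall x, U x -> ex_derive f x).
Proof.
  split; [intros Hf x Hx; exact (Hf 0%nat (le_n 0) x Hx)|].
  intros Hf m Hm x Hx; replace m with 0%nat by lia; exact (Hf x Hx).
Qed.

Lemma Cn_on_S (n : nat) (f : R -> R) :
  Cn_on (S n) f <-> (forall x, U x -> ex_derive f x) /\ Cn_on n (Derive f).
Proof.
  split.
  - intros Hf; split; [intros x Hx; apply (Hf 0%nat); [lia|exact Hx]|].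
    intros m Hm x Hx; apply ex_derive_ext with (Derive_n f (S m)).
    + intros; symmetry; apply Derive_n_Derive.
    + apply Hf; [lia|exact Hx].
  - intros [Hf Hf'] [|m] Hm x Hx; [exact (Hf x Hx)|].
    apply ex_derive_ext with (Derive_n (Derive f) m).
    + intros; apply Derive_n_Derive.
    + apply Hf'; [lia|exact Hx].
Qed.

Lemma Cn_on_pred (n : nat) (f : R -> R) : Cn_on (S n) f -> Cn_on n f.
Proof. intros Hf m Hm; apply Hf; lia. Qed.

Lemma Cn_on_const (n : nat) (c : R) : Cn_on n (fun _ => c).
Proof.
  intros [|m] _ x _; [apply ex_derive_const|].
  apply ex_derive_ext with (fun _ => 0); [intros; symmetry; apply Derive_n_const|].
  apply ex_derive_const.
Qed.

Lemma Cn_on_plus (n : nat) : forall f g : R -> R, Cn_on n f -> Cn_on n g -> Cn_on n (fun x => f x + g x).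
Proof.
  induction n as [|n IHn]; intros f g Hf Hg.
  - apply Cn_on_0; intros x Hx.
    apply (@ex_derive_plus R_AbsRing R_NormedModule); [exact (Hf 0%nat (le_n 0) x Hx)|exact (Hg 0%nat (le_n 0) x Hx)].
  - apply Cn_on_S in Hf as [Hf Hf']; apply Cn_on_S in Hg as [Hg Hg'].
    apply Cn_on_S; split.
    + intros x Hx; apply (@ex_derive_plus R_AbsRing R_NormedModule); [exact (Hf x Hx)|exact (Hg x Hx)].
    + apply Cn_on_ext with (fun x => Derive f x + Derive g x); [|now apply IHn].
      intros x Hx; symmetry; apply Derive_plus; [exact (Hf x Hx)|exact (Hg x Hx)].
Qed.

Lemma Cn_on_mult (n : nat) : forall f g : R -> R, Cn_on n f -> Cn_on n g -> Cn_on n (fun x => f x * g x).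
Proof.
  induction n as [|n IHn]; intros f g Hf Hg.
  - apply Cn_on_0; intros x Hx.
    apply ex_derive_mult; [exact (Hf 0%nat (le_n 0) x Hx)|exact (Hg 0%nat (le_n 0) x Hx)].
  - pose proof (Cn_on_pred _ _ Hf) as Hfn; pose proof (Cn_on_pred _ _ Hg) as Hgn.
    apply Cn_on_S in Hf as [Hf Hf']; apply Cn_on_S in Hg as [Hg Hg'].
    apply Cn_on_S; split.
    + intros x Hx; apply ex_derive_mult; [exact (Hf x Hx)|exact (Hg x Hx)].
    + apply Cn_on_ext with (fun x => Derive f x * g x + f x * Derive g x).
      * intros x Hx; symmetry; apply Derive_mult; [exact (Hf x Hx)|exact (Hg x Hx)].
      * apply Cn_on_plus; apply IHn; assumption.
Qed.

Lemma Cn_on_inv (n : nat) (f : R -> R) : (forall x, U x -> f x <> 0) -> Cn_on n f -> Cn_on n (fun x => / f x).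
Proof.
  intros Hf0; induction n as [|n IHn]; intros Hf.
  - apply Cn_on_0; intros x Hx; apply ex_derive_inv; [exact (Hf 0%nat (le_n 0) x Hx)|exact (Hf0 x Hx)].
  - pose proof (Cn_on_pred _ _ Hf) as Hfn.
    apply Cn_on_S in Hf as [Hf Hf']; apply Cn_on_S; split.
    + intros x Hx; apply ex_derive_inv; [exact (Hf x Hx)|exact (Hf0 x Hx)].
    + apply Cn_on_ext with (fun x => (-1 * Derive f x) * (/ f x * / f x)).
      * intros x Hx; rewrite Derive_inv by (exact (Hf x Hx) || exact (Hf0 x Hx)).
        field; exact (Hf0 x Hx).
      * apply Cn_on_mult; [apply Cn_on_mult; [apply Cn_on_const|exact Hf']|].
        apply Cn_on_mult; apply IHn; exact Hfn.
Qed.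

Lemma smooth_on_Cn_on (f : R -> R) : smooth_on U f <-> forall n, Cn_on n f.
Proof.
  split; [intros Hf n m _ x Hx; exact (Hf m x Hx)|].
  intros Hf n x Hx; exact (Hf n n (le_n n) x Hx).
Qed.

Lemma smooth_on_ext (f g : R -> R) : (forall x, U x -> f x = g x) -> smooth_on U f -> smooth_on U g.
Proof.
  intros Hfg Hf; apply smooth_on_Cn_on; intros n.
  apply Cn_on_ext with f; [exact Hfg|now apply smooth_on_Cn_on].
Qed.

Lemma smooth_on_const (c : R) : smooth_on U (fun _ => c).
Proof. apply smooth_on_Cn_on; intros n; apply Cn_on_const. Qed.

Lemma smooth_on_plus (f g : R -> R) :
  smooth_on U f -> smooth_on U g -> smooth_on U (fun x => f x + g x).
Proof.
  intros Hf Hg; apply smooth_on_Cn_on; intros n.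
  apply Cn_on_plus; now apply smooth_on_Cn_on.
Qed.

Lemma smooth_on_mult (f g : R -> R) :
  smooth_on U f -> smooth_on U g -> smooth_on U (fun x => f x * g x).
Proof.
  intros Hf Hg; apply smooth_on_Cn_on; intros n.
  apply Cn_on_mult; now apply smooth_on_Cn_on.
Qed.

Lemma smooth_on_opp (f : R -> R) : smooth_on U f -> smooth_on U (fun x => - f x).
Proof.
  intros Hf; apply smooth_on_ext with (fun x => -1 * f x); [intros; ring|].
  apply smooth_on_mult; [apply smooth_on_const|exact Hf].
Qed.

Lemma smooth_on_div (f g : R -> R) : (forall x, U x -> g x <> 0) ->
  smooth_on U f -> smooth_on U g -> smooth_on U (fun x => f x / g x).
Proof.
  intros Hg0 Hf Hg; apply smooth_on_mult; [exact Hf|].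
  apply smooth_on_Cn_on; intros n; apply Cn_on_inv; [exact Hg0|now apply smooth_on_Cn_on].
Qed.

End SmoothOn.

Lemma smooth_on_Derive (U : R -> Prop) (f : R -> R) : smooth_on U f -> smooth_on U (Derive f).
Proof.
  intros Hf; apply smooth_on_Cn_on; intros n.
  apply (proj2 (proj1 (Cn_on_S U n f) (proj1 (smooth_on_Cn_on U f) Hf (S n)))).
Qed.

Lemma ex_derive_of_smooth_on (U : R -> Prop) (f : R -> R) (x : R) : smooth_on U f -> U x -> ex_derive f x.
Proof. intros Hf Hx; exact (Hf 0%nat x Hx). Qed.

Lemma continuity_pt_of_smooth_on (U : R -> Prop) (f : R -> R) (x : R) : smooth_on U f -> U x -> continuity_pt f x.
Proof.
  intros Hf Hx; apply continuity_pt_filterlim, (@ex_derive_continuous R_AbsRing R_NormedModule).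
  exact (ex_derive_of_smooth_on U f x Hf Hx).
Qed.

Lemma is_lim_Rmult (f g : R -> R) (x a b : R) :
  is_lim f x a -> is_lim g x b -> is_lim (fun t => f t * g t) x (a * b).
Proof. intros Hf Hg; exact (is_lim_mult f g x a b Hf Hg I). Qed.

Lemma is_lim_Rplus (f g : R -> R) (x a b : R) :
  is_lim f x a -> is_lim g x b -> is_lim (fun t => f t + g t) x (a + b).
Proof. intros Hf Hg; eapply is_lim_plus; [exact Hf|exact Hg|reflexivity]. Qed.

Lemma is_lim_Rinv (f : R -> R) (x a : R) :
  is_lim f x a -> a <> 0 -> is_lim (fun t => / f t) x (/ a).
Proof.
  intros Hf Ha; apply (is_lim_inv f x a Hf).
  intros E; apply Ha; injection E; auto.
Qed.

Lemma is_lim_Rpow (f : R -> R) (x l : R) (k : nat) :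
  is_lim f x l -> is_lim (fun t => f t ^ k) x (l ^ k).
Proof.
  intros Hf; induction k as [|k IHk]; [exact (is_lim_const 1 x)|].
  exact (is_lim_Rmult _ _ _ _ _ Hf IHk).
Qed.

Lemma is_lim_Runique (f : R -> R) (x a b : R) : is_lim f x a -> is_lim f x b -> a = b.
Proof.
  intros Ha Hb; apply is_lim_unique in Ha, Hb.
  rewrite Ha in Hb; injection Hb; auto.
Qed.

Lemma is_lim_id_pow (k : nat) : is_lim (fun t => t ^ k) 0 (0 ^ k).
Proof. apply is_lim_Rpow, (is_lim_id 0). Qed.

Lemma Rabs_le_pow_of_derive_bound (g dg : R -> R) (m : nat) (K t : R) :
  0 <= K -> g 0 = 0 ->
  (forall x, Rabs x <= Rabs t -> is_derive g x (dg x) /\ Rabs (dg x) <= K * Rabs x ^ m) ->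
  Rabs (g t) <= K * Rabs t ^ S m.
Proof.
  intros HK Hg0 Hdg.
  destruct (MVT_cor4 g dg 0 (Rabs t)) with (b := t) as [c [Hc Hct]].
  - intros c Hc; rewrite Rminus_0_r in Hc; exact (proj1 (Hdg c Hc)).
  - rewrite Rminus_0_r; apply Rle_refl.
  - rewrite Hg0, !Rminus_0_r in Hc; rewrite !Rminus_0_r in Hct.
    rewrite Hc, Rabs_mult; simpl.
    replace (K * (Rabs t * Rabs t ^ m)) with (K * Rabs t ^ m * Rabs t) by ring.
    apply Rmult_le_compat_r; [apply Rabs_pos|].
    apply Rle_trans with (K * Rabs c ^ m); [exact (proj2 (Hdg c Hct))|].
    apply Rmult_le_compat_l; [exact HK|].
    apply pow_incr; split; [apply Rabs_pos|exact Hct].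
Qed.

Lemma locally'_0_intro (P : R -> Prop) (delta : R) :
  0 < delta -> (forall t, t <> 0 -> Rabs t < delta -> P t) -> locally' 0 P.
Proof.
  intros Hd HP; exists (mkposreal delta Hd); intros t Ht Ht0; apply HP; [exact Ht0|].
  change (Rabs (t - 0) < delta) in Ht; rewrite Rminus_0_r in Ht; exact Ht.
Qed.

Lemma locally'_0_elim (P : R -> Prop) :
  locally' 0 P -> exists delta, 0 < delta /\ forall t, t <> 0 -> Rabs t < delta -> P t.
Proof.
  intros [d Hd]; exists d; split; [apply cond_pos|].
  intros t Ht0 Ht; apply Hd; [|exact Ht0].
  change (Rabs (t - 0) < d); rewrite Rminus_0_r; exact Ht.
Qed.

Lemma ival_of_Rabs_lt (a b t : R) : Rabs t < Rmin (- a) b -> ival a b t.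
Proof.
  intros Ht; apply Rabs_def2 in Ht.
  generalize (Rmin_l (- a) b) (Rmin_r (- a) b); unfold ival; lra.
Qed.

Lemma value_at_0_of_is_lim_div_pow (g : R -> R) (m : nat) (L : R) :
  continuity_pt g 0 -> is_lim (fun t => g t / t ^ m) 0 L -> g 0 = L * 0 ^ m.
Proof.
  intros Hg HL; apply (is_lim_Runique g 0); [exact (is_lim_continuity _ _ Hg)|].
  apply is_lim_ext_loc with (fun t => g t / t ^ m * t ^ m).
  - apply (locally'_0_intro _ 1 Rlt_0_1); intros t Ht0 _.
    field; apply pow_nonzero; exact Ht0.
  - apply is_lim_Rmult; [exact HL|apply is_lim_id_pow].
Qed.

Lemma is_derive_sub_pow_S (f : R -> R) (x L : R) (m : nat) : ex_derive f x ->
  is_derive (fun s => f s - L / INR (S m) * s ^ S m) x (Derive f x - L * x ^ m).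
Proof.
  intros Hf; assert (HSm : INR (S m) <> 0) by (apply not_0_INR; lia).
  replace (Derive f x - L * x ^ m)
    with (Derive f x - L / INR (S m) * (INR (S m) * 1 * x ^ pred (S m))) by (simpl; field; exact HSm).
  apply (@is_derive_minus R_AbsRing R_NormedModule); [exact (Derive_correct _ _ Hf)|].
  apply (is_derive_scal (fun s => s ^ S m)), is_derive_pow, (@is_derive_id R_AbsRing).
Qed.

(* l'Hopital's rule for t^(m+1), via the mean value theorem for f(t) - L t^(m+1) / (m+1). *)
Lemma is_lim_div_pow_S (a b : R) (f : R -> R) (m : nat) (L : R) :
  a < 0 < b -> (forall x, ival a b x -> ex_derive f x) ->
  continuity_pt (Derive f) 0 -> f 0 = 0 ->
  is_lim (fun t => Derive f t / t ^ m) 0 L ->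
  is_lim (fun t => f t / t ^ S m) 0 (L / INR (S m)).
Proof.
  intros Hab Hf Hf' Hf0 HL.
  assert (HSm : INR (S m) <> 0) by (apply not_0_INR; lia).
  pose proof (value_at_0_of_is_lim_div_pow _ _ _ Hf' HL) as Hd0.
  set (g := fun s => f s - L / INR (S m) * s ^ S m).
  assert (Hg : forall x, ival a b x -> is_derive g x (Derive f x - L * x ^ m))
    by (intros x Hx; exact (is_derive_sub_pow_S f x L m (Hf x Hx))).
  apply is_lim_spec; intros eps.
  apply is_lim_spec in HL.
  destruct (locally'_0_elim _ (HL (pos_div_2 eps))) as [d [Hd HdL]]; simpl in HdL.
  assert (Heps : 0 < eps) by apply cond_pos.
  assert (Hr : 0 < Rmin (- a) b) by (apply Rmin_pos; lra).
  apply (locally'_0_intro _ (Rmin d (Rmin (- a) b))); [apply Rmin_pos; lra|].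
  intros t Ht0 Ht.
  assert (Htd : Rabs t < d) by (generalize (Rmin_l d (Rmin (- a) b)); lra).
  assert (Htr : Rabs t < Rmin (- a) b) by (generalize (Rmin_r d (Rmin (- a) b)); lra).
  assert (Hgt : Rabs (g t) <= eps / 2 * Rabs t ^ S m).
  { apply (Rabs_le_pow_of_derive_bound g (fun x => Derive f x - L * x ^ m)); [lra| |].
    - unfold g; rewrite Hf0; simpl; ring.
    - intros x Hx; split; [apply Hg, ival_of_Rabs_lt; lra|].
      destruct (Req_dec x 0) as [->|Hx0].
      + rewrite Hd0, Rminus_diag_eq, Rabs_R0 by reflexivity.
        apply Rmult_le_pos; [lra|apply pow_le; lra].
      + replace (Derive f x - L * x ^ m) with (x ^ m * (Derive f x / x ^ m - L))
          by (field; apply pow_nonzero; exact Hx0).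
        rewrite Rabs_mult, <- RPow_abs, Rmult_comm.
        apply Rmult_le_compat_r; [apply pow_le, Rabs_pos|].
        apply Rlt_le, HdL; [exact Hx0|lra]. }
  assert (Htm : 0 < Rabs t ^ S m) by (apply pow_lt, Rabs_pos_lt; exact Ht0).
  replace (f t / t ^ S m - L / INR (S m)) with (g t / t ^ S m)
    by (unfold g; field; split; [exact HSm|apply pow_nonzero; exact Ht0]).
  unfold Rdiv; rewrite Rabs_mult, Rabs_inv, <- RPow_abs.
  apply Rle_lt_trans with (eps / 2 * Rabs t ^ S m * / Rabs t ^ S m).
  - apply Rmult_le_compat_r; [apply Rlt_le, Rinv_0_lt_compat; exact Htm|exact Hgt].
  - rewrite Rmult_assoc, Rinv_r by lra; lra.
Qed.

Lemma is_lim_div_pow_Derive_n (a b : R) (m : nat) (f : R -> R) :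
  a < 0 < b -> smooth_on (ival a b) f ->
  (forall j, (j < m)%nat -> Derive_n f j 0 = 0) ->
  is_lim (fun t => f t / t ^ m) 0 (Derive_n f m 0 / INR (fact m)).
Proof.
  intros Hab; revert f; induction m as [|m IHm]; intros f Hf Hz.
  - replace (Derive_n f 0 0 / INR (fact 0)) with (f 0) by (simpl; field).
    apply is_lim_ext with f; [intros t; simpl; field|].
    apply is_lim_continuity, (continuity_pt_of_smooth_on (ival a b)); [exact Hf|unfold ival; lra].
  - replace (Derive_n f (S m) 0 / INR (fact (S m)))
      with (Derive_n (Derive f) m 0 / INR (fact m) / INR (S m)).
    2: { rewrite Derive_n_Derive, fact_simpl, mult_INR; field.
         split; [apply INR_fact_neq_0|apply not_0_INR; lia]. }
    apply is_lim_div_pow_S with a b; [exact Hab| | |exact (Hz 0%nat ltac:(lia))|].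
    + intros x Hx; exact (ex_derive_of_smooth_on _ _ _ Hf Hx).
    + apply (continuity_pt_of_smooth_on (ival a b)); [now apply smooth_on_Derive|unfold ival; lra].
    + apply IHm; [now apply smooth_on_Derive|].
      intros j Hj; rewrite Derive_n_Derive; apply Hz; lia.
Qed.

Lemma Derive_n_of_is_lim_div_pow (a b : R) (m : nat) (c : R) (f : R -> R) :
  a < 0 < b -> smooth_on (ival a b) f ->
  is_lim (fun t => f t / t ^ m) 0 c ->
  (forall j, (j < m)%nat -> Derive_n f j 0 = 0) /\ Derive_n f m 0 = c * INR (fact m).
Proof.
  intros Hab Hf Hc.
  assert (Hlow : forall j, (j <= m)%nat -> forall i, (i < j)%nat -> Derive_n f i 0 = 0).
  { induction j as [|j IHj]; intros Hj i Hi; [lia|].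
    destruct (Nat.eq_dec i j) as [->|Hij]; [|apply IHj; lia].
    assert (Hlim0 : is_lim (fun t => f t / t ^ j) 0 0).
    { apply is_lim_ext_loc with (fun t => t ^ (m - j) * (f t / t ^ m)).
      - apply (locally'_0_intro _ 1 Rlt_0_1); intros t Ht0 _.
        replace m with ((m - j) + j)%nat at 2 by lia; rewrite pow_add.
        field; split; apply pow_nonzero; exact Ht0.
      - replace 0 with (0 ^ (m - j) * c) at 2
          by (replace (m - j)%nat with (S (m - j - 1)) by lia; simpl; ring).
        apply is_lim_Rmult; [apply is_lim_id_pow|exact Hc]. }
    pose proof (is_lim_div_pow_Derive_n a b j f Hab Hf (IHj ltac:(lia))) as Hlim.
    pose proof (is_lim_Runique _ _ _ _ Hlim Hlim0) as E.
    apply Rmult_eq_reg_r with (/ INR (fact j)); [rewrite Rmult_0_l; exact E|].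
    apply Rinv_neq_0_compat, INR_fact_neq_0. }
  split; [intros j Hj; exact (Hlow m (le_n m) j Hj)|].
  pose proof (is_lim_div_pow_Derive_n a b m f Hab Hf (Hlow m (le_n m))) as Hlim.
  rewrite <- (is_lim_Runique _ _ _ _ Hlim Hc); field; apply INR_fact_neq_0.
Qed.

Definition zero_of_order (f : R -> R) (m : nat) : Prop :=
  exists c, c <> 0 /\ is_lim (fun t => f t / t ^ m) 0 c.

Lemma zero_of_order_Derive_n (a b : R) (m : nat) (f : R -> R) :
  a < 0 < b -> smooth_on (ival a b) f ->
  zero_of_order f m <->
  (forall j, (j < m)%nat -> Derive_n f j 0 = 0) /\ Derive_n f m 0 <> 0.
Proof.
  intros Hab Hf; split.
  - intros [c [Hc0 Hc]].
    destruct (Derive_n_of_is_lim_div_pow a b m c f Hab Hf Hc) as [Hz Hm].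
    split; [exact Hz|rewrite Hm].
    apply Rmult_integral_contrapositive_currified; [exact Hc0|apply INR_fact_neq_0].
  - intros [Hz Hm]; exists (Derive_n f m 0 / INR (fact m)); split.
    + apply Rmult_integral_contrapositive_currified; [exact Hm|].
      apply Rinv_neq_0_compat, INR_fact_neq_0.
    + exact (is_lim_div_pow_Derive_n a b m f Hab Hf Hz).
Qed.

Lemma zero_of_order_Derive_div (a b : R) (p : nat) (f l : R -> R) :
  a < 0 < b -> smooth_on (ival a b) f -> smooth_on (ival a b) l ->
  (forall x, ival a b x -> l x <> 0) ->
  zero_of_order f (S p) -> zero_of_order (Derive (fun s => f s / l s)) p.
Proof.
  intros Hab Hf Hl Hl0 [c [Hc0 Hc]].
  assert (H0 : ival a b 0) by (unfold ival; lra).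
  set (g := fun s => f s / l s).
  assert (Hg : smooth_on (ival a b) g) by (apply smooth_on_div; [apply open_ival|exact Hl0|exact Hf|exact Hl]).
  assert (Hgord : zero_of_order g (S p)).
  { exists (c * / l 0); split.
    - apply Rmult_integral_contrapositive_currified; [exact Hc0|].
      apply Rinv_neq_0_compat, Hl0, H0.
    - apply is_lim_ext with (fun t => f t / t ^ S p * / l t); [intros t; unfold g, Rdiv; ring|].
      apply is_lim_Rmult; [exact Hc|apply is_lim_Rinv; [|exact (Hl0 0 H0)]].
      apply is_lim_continuity, (continuity_pt_of_smooth_on (ival a b)); [exact Hl|exact H0]. }
  apply (zero_of_order_Derive_n a b (S p) g Hab Hg) in Hgord as [Hz Hm].
  apply (zero_of_order_Derive_n a b p _ Hab (smooth_on_Derive _ _ Hg)).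
  split; [intros j Hj|]; rewrite Derive_n_Derive; [apply Hz; lia|exact Hm].
Qed.

Lemma locally'_pos_of_is_lim (f : R -> R) (l : R) :
  is_lim f 0 l -> 0 < l -> locally' 0 (fun t => 0 < f t).
Proof.
  intros Hf Hl; apply is_lim_spec in Hf.
  apply (filter_imp (fun t => Rabs (f t - l) < l / 2)); [intros t Ht; apply Rabs_def2 in Ht; lra|].
  assert (Hl2 : 0 < l / 2) by lra.
  exact (Hf (mkposreal _ Hl2)).
Qed.

Lemma is_lim_nonzero_of_scal (B A1 A2 X1 X2 : R -> R) (a1 a2 l1 l2 : R) :
  is_lim A1 0 a1 -> is_lim A2 0 a2 -> is_lim X1 0 l1 -> is_lim X2 0 l2 ->
  a1 <> 0 \/ a2 <> 0 -> l1 <> 0 ->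
  locally' 0 (fun t => B t * A1 t = X1 t /\ B t * A2 t = X2 t) ->
  exists c, c <> 0 /\ is_lim B 0 c.
Proof.
  intros HA1 HA2 HX1 HX2 Ha Hl1 HBA.
  set (S0 := a1 * a1 + a2 * a2).
  assert (HS0 : 0 < S0).
  { unfold S0; destruct Ha as [Ha|Ha]; apply Rsqr_pos_lt in Ha; unfold Rsqr in Ha; nra. }
  assert (HS : is_lim (fun t => A1 t * A1 t + A2 t * A2 t) 0 S0)
    by (apply is_lim_Rplus; apply is_lim_Rmult; assumption).
  set (c := (l1 * a1 + l2 * a2) * / S0).
  assert (HB : is_lim B 0 c).
  { apply is_lim_ext_loc with (fun t => (X1 t * A1 t + X2 t * A2 t) * / (A1 t * A1 t + A2 t * A2 t)).
    - generalize (filter_and _ _ HBA (locally'_pos_of_is_lim _ _ HS HS0)); apply filter_imp.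
      intros t [[E1 E2] Ht]; rewrite <- E1, <- E2; field; lra.
    - apply is_lim_Rmult; [apply is_lim_Rplus; apply is_lim_Rmult; assumption|].
      apply is_lim_Rinv; [exact HS|lra]. }
  exists c; split; [|exact HB]; intros Hc0.
  assert (H1 : is_lim (fun t => B t * A1 t) 0 (c * a1)) by (apply is_lim_Rmult; assumption).
  assert (H2 : is_lim (fun t => B t * A1 t) 0 l1).
  { apply is_lim_ext_loc with X1; [|exact HX1].
    generalize HBA; apply filter_imp; intros t [E1 _]; symmetry; exact E1. }
  apply Hl1; rewrite <- (is_lim_Runique _ _ _ _ H1 H2), Hc0; ring.
Qed.

Definition vscal (c : R) (v : R * R) : R * R := (c * fst v, c * snd v).

Lemma is_derive_eq_value (f : R -> R) (x l l' : R) : is_derive f x l -> l = l' -> is_derive f x l'.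
Proof. intros H <-; exact H. Qed.

Definition is_derive_curve (c : R -> R * R) (t : R) (v : R * R) : Prop :=
  is_derive (fun s => fst (c s)) t (fst v) /\ is_derive (fun s => snd (c s)) t (snd v).

Lemma is_derive_curve_dcurve (c : R -> R * R) (t : R) :
  ex_derive (fun s => fst (c s)) t -> ex_derive (fun s => snd (c s)) t ->
  is_derive_curve c t (dcurve c t).
Proof. intros H1 H2; split; apply Derive_correct; assumption. Qed.

Lemma dcurve_of_is_derive_curve (c : R -> R * R) (t : R) (v : R * R) :
  is_derive_curve c t v -> dcurve c t = v.
Proof.
  intros [H1 H2]; destruct v as [v1 v2]; unfold dcurve.
  f_equal; apply is_derive_unique; assumption.
Qed.

Lemma decompose_orthogonal_unit (v w : R * R) :
  dot v v = 1 -> dot w v = 0 -> w = vscal (dot w (Mrot v)) (Mrot v).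
Proof.
  destruct v as [v1 v2], w as [w1 w2]; unfold dot, vscal, Mrot; simpl; intros Hv Hwv.
  f_equal; apply Rminus_diag_uniq.
  - replace (w1 - (w1 * - v2 + w2 * v1) * - v2) with (w1 * (1 - (v1 * v1 + v2 * v2)) + v1 * (w1 * v1 + w2 * v2)) by ring.
    rewrite Hv, Hwv; ring.
  - replace (w2 - (w1 * - v2 + w2 * v1) * v1) with (w2 * (1 - (v1 * v1 + v2 * v2)) + v2 * (w1 * v1 + w2 * v2)) by ring.
    rewrite Hv, Hwv; ring.
Qed.

Lemma dot_Mpow (k : nat) (v : R * R) : dot (Mpow k v) (Mpow k v) = dot v v.
Proof. induction k as [|k IHk]; simpl; [reflexivity|rewrite <- IHk; unfold dot; simpl; ring]. Qed.

Section Frenet.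

Variables (a b : R) (gamma nu : R -> R * R).
Hypothesis HL : legendre_immersion a b gamma nu.
Hypothesis Hell : forall t, ival a b t -> ell nu t <> 0.

Lemma smooth_on_dot_dcurve_mu (c : R -> R * R) :
  smooth_on (ival a b) (fun t => fst (c t)) -> smooth_on (ival a b) (fun t => snd (c t)) ->
  smooth_on (ival a b) (fun t => dot (dcurve c t) (mu_of nu t)).
Proof.
  destruct HL as (_ & _ & Hn1 & Hn2 & _); intros Hc1 Hc2.
  apply smooth_on_plus; [apply open_ival| |].
  - apply (smooth_on_mult _ (open_ival a b) (Derive (fun s => fst (c s))) (fun t => - snd (nu t))).
    + exact (smooth_on_Derive _ _ Hc1).
    + exact (smooth_on_opp _ (open_ival a b) _ Hn2).
  - exact (smooth_on_mult _ (open_ival a b) (Derive (fun s => snd (c s))) _ (smooth_on_Derive _ _ Hc2) Hn1).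
Qed.

Lemma smooth_on_ell : smooth_on (ival a b) (ell nu).
Proof.
  destruct HL as (_ & _ & Hn1 & Hn2 & _).
  exact (smooth_on_dot_dcurve_mu nu Hn1 Hn2).
Qed.

Lemma smooth_on_betak (k : nat) : smooth_on (ival a b) (betak gamma nu k).
Proof.
  destruct HL as (Hg1 & Hg2 & _).
  induction k as [|k IHk].
  - exact (smooth_on_dot_dcurve_mu gamma Hg1 Hg2).
  - apply smooth_on_Derive, (smooth_on_div _ (open_ival a b)); [exact Hell|exact IHk|exact smooth_on_ell].
Qed.

Lemma zero_of_order_betak (k m : nat) : a < 0 < b ->
  zero_of_order (beta0 gamma nu) (k + m) -> zero_of_order (betak gamma nu k) m.
Proof.
  intros Hab; revert m; induction k as [|k IHk]; intros m Hbeta; [exact Hbeta|].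
  apply (zero_of_order_Derive_div a b);
    [exact Hab|apply smooth_on_betak|exact smooth_on_ell|exact Hell|].
  apply IHk; replace (k + S m)%nat with (S k + m)%nat by lia; exact Hbeta.
Qed.

Lemma dot_dcurve_nu (t : R) : ival a b t -> dot (dcurve nu t) (nu t) = 0.
Proof.
  intros Ht; destruct HL as (_ & _ & Hn1 & Hn2 & Hunit & _).
  destruct (is_derive_curve_dcurve nu t) as [D1 D2];
    try (apply (ex_derive_of_smooth_on (ival a b)); assumption).
  assert (Hsq : is_derive (fun s => dot (nu s) (nu s)) t (2 * dot (dcurve nu t) (nu t))).
  { unfold dot; replace (2 * _) with
      (fst (dcurve nu t) * fst (nu t) + fst (nu t) * fst (dcurve nu t)
       + (snd (dcurve nu t) * snd (nu t) + snd (nu t) * snd (dcurve nu t))) by (simpl; ring).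
    apply (@is_derive_plus R_AbsRing R_NormedModule); apply (@is_derive_mult R_AbsRing);
      try assumption; intros; apply Rmult_comm. }
  assert (Hone : is_derive (fun s => dot (nu s) (nu s)) t 0).
  { apply is_derive_ext_loc with (fun _ => 1); [|apply (@is_derive_const R_AbsRing R_NormedModule)].
    apply (filter_imp (ival a b)); [intros s Hs; symmetry; exact (Hunit s Hs)|exact (open_ival a b t Ht)]. }
  pose proof (is_derive_unique _ _ _ Hsq) as E; rewrite (is_derive_unique _ _ _ Hone) in E; lra.
Qed.

Lemma dcurve_nu (t : R) : ival a b t -> dcurve nu t = vscal (ell nu t) (mu_of nu t).
Proof.
  intros Ht; destruct HL as (_ & _ & _ & _ & Hunit & _).
  apply decompose_orthogonal_unit; [exact (Hunit t Ht)|exact (dot_dcurve_nu t Ht)].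
Qed.

Lemma dcurve_gamma (t : R) : ival a b t -> dcurve gamma t = vscal (beta0 gamma nu t) (mu_of nu t).
Proof.
  intros Ht; destruct HL as (_ & _ & _ & _ & Hunit & Horth & _).
  apply decompose_orthogonal_unit; [exact (Hunit t Ht)|exact (Horth t Ht)].
Qed.

Lemma is_derive_curve_Mpow_nu (k : nat) (t : R) : ival a b t ->
  is_derive_curve (fun s => Mpow k (nu s)) t (vscal (ell nu t) (Mpow (S k) (nu t))).
Proof.
  intros Ht; destruct HL as (_ & _ & Hn1 & Hn2 & _).
  induction k as [|k [IH1 IH2]].
  - change (is_derive_curve nu t (vscal (ell nu t) (mu_of nu t))); rewrite <- (dcurve_nu t Ht).
    apply is_derive_curve_dcurve; apply (ex_derive_of_smooth_on (ival a b)); assumption.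
  - simpl in IH1, IH2; split; simpl.
    + replace (ell nu t * - fst (Mpow k (nu t))) with (- (ell nu t * fst (Mpow k (nu t)))) by ring.
      exact (@is_derive_opp R_AbsRing R_NormedModule _ _ _ IH2).
    + exact IH1.
Qed.

Lemma is_derive_curve_Ev (k : nat) (t : R) : ival a b t ->
  is_derive_curve (Ev gamma nu k) t (vscal (betak gamma nu k t) (Mpow (S k) (nu t))).
Proof.
  intros Ht; destruct HL as (Hg1 & Hg2 & _).
  induction k as [|k [IH1 IH2]].
  - change (is_derive_curve gamma t (vscal (beta0 gamma nu t) (mu_of nu t))).
    rewrite <- (dcurve_gamma t Ht).
    apply is_derive_curve_dcurve; apply (ex_derive_of_smooth_on (ival a b)); assumption.
  - set (q := fun s => betak gamma nu k s / ell nu s).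
    assert (Hq : is_derive q t (betak gamma nu (S k) t)).
    { apply Derive_correct, (ex_derive_of_smooth_on (ival a b)); [|exact Ht].
      apply (smooth_on_div _ (open_ival a b)); [exact Hell|apply smooth_on_betak|exact smooth_on_ell]. }
    destruct (is_derive_curve_Mpow_nu k t Ht) as [M1 M2].
    pose proof (Hell t Ht) as Hl.
    (* In the derivative of (beta_k / ell) M^k nu, the term beta_k M^(k+1) nu cancels (Ev^k)'. *)
    split.
    + change (is_derive (fun s => fst (Ev gamma nu k s) - q s * fst (Mpow k (nu s))) t
                (fst (vscal (betak gamma nu (S k) t) (Mpow (S (S k)) (nu t))))).
      eapply is_derive_eq_value.
      * apply (@is_derive_minus R_AbsRing R_NormedModule); [exact IH1|].
        apply (@is_derive_mult R_AbsRing); [exact Hq|exact M1|exact Rmult_comm].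
      * unfold q, minus, plus, opp, mult; simpl; field; exact Hl.
    + change (is_derive (fun s => snd (Ev gamma nu k s) - q s * snd (Mpow k (nu s))) t
                (snd (vscal (betak gamma nu (S k) t) (Mpow (S (S k)) (nu t))))).
      eapply is_derive_eq_value.
      * apply (@is_derive_minus R_AbsRing R_NormedModule); [exact IH2|].
        apply (@is_derive_mult R_AbsRing); [exact Hq|exact M2|exact Rmult_comm].
      * unfold q, minus, plus, opp, mult; simpl; field; exact Hl.
Qed.

Lemma singular_point_Ev_iff (k : nat) (t : R) : ival a b t ->
  singular_point (Ev gamma nu k) t <-> betak gamma nu k t = 0.
Proof.
  intros Ht; destruct HL as (_ & _ & _ & _ & Hunit & _).
  unfold singular_point; rewrite (dcurve_of_is_derive_curve _ _ _ (is_derive_curve_Ev k t Ht)).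
  pose proof (Hunit t Ht) as Hn; rewrite <- (dot_Mpow (S k)) in Hn.
  revert Hn; unfold vscal, dot; destruct (Mpow (S k) (nu t)) as [m1 m2]; simpl; intros Hn.
  split; [|intros ->; f_equal; ring].
  intros E; injection E as E1 E2; nra.
Qed.

End Frenet.

(* Qualified names: [Reals] also exports an unrelated [d1]. *)
Definition dir_deriv (F : R * R -> R) (p v : R * R) : R :=
  Defs.d1 F p * fst v + Defs.d2 F p * snd v.

Lemma sq_center (p : R * R) (d : R) : 0 < d -> sq p d p.
Proof. intros Hd; unfold sq; rewrite !Rminus_diag_eq, Rabs_R0 by reflexivity; lra. Qed.

Lemma locally_2d_sq (p : R * R) (d x y : R) :
  sq p d (x, y) -> locally_2d (fun u v => sq p d (u, v)) x y.
Proof.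
  unfold sq; simpl; intros [Hx Hy].
  set (r := Rmin (d - Rabs (x - fst p)) (d - Rabs (y - snd p))).
  assert (Hr : 0 < r) by (apply Rmin_pos; lra).
  exists (mkposreal r Hr); simpl; intros u v Hu Hv.
  generalize (Rmin_l (d - Rabs (x - fst p)) (d - Rabs (y - snd p)))
             (Rmin_r (d - Rabs (x - fst p)) (d - Rabs (y - snd p))); fold r; intros.
  split.
  - replace (u - fst p) with ((u - x) + (x - fst p)) by ring.
    eapply Rle_lt_trans; [apply Rabs_triang|lra].
  - replace (v - snd p) with ((v - y) + (y - snd p)) by ring.
    eapply Rle_lt_trans; [apply Rabs_triang|lra].
Qed.

Lemma locally_Rabs_sub_lt (q d x : R) : Rabs (x - q) < d -> locally x (fun y => Rabs (y - q) < d).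
Proof.
  intros Hx; assert (He : 0 < d - Rabs (x - q)) by lra.
  exists (mkposreal _ He); intros y Hy; change (Rabs (y - x) < d - Rabs (x - q)) in Hy.
  replace (y - q) with ((y - x) + (x - q)) by ring.
  eapply Rle_lt_trans; [apply Rabs_triang|simpl in Hy; lra].
Qed.

Lemma locally_sq_of_continuity (c : R -> R * R) (t : R) (p : R * R) (d : R) :
  continuity_pt (fun s => fst (c s)) t -> continuity_pt (fun s => snd (c s)) t ->
  sq p d (c t) -> locally t (fun s => sq p d (c s)).
Proof.
  intros H1 H2 [Hct1 Hct2].
  apply continuity_pt_filterlim in H1, H2; apply filter_and.
  - exact (H1 _ (locally_Rabs_sub_lt _ _ _ Hct1)).
  - exact (H2 _ (locally_Rabs_sub_lt _ _ _ Hct2)).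
Qed.

Lemma is_derive_comp_Ck2 (F : R * R -> R) (p : R * R) (d : R) (c : R -> R * R) (t : R) (v : R * R) :
  Ck2 1 F (sq p d) -> sq p d (c t) -> is_derive_curve c t v ->
  is_derive (fun s => F (c s)) t (dir_deriv F (c t) v).
Proof.
  intros [_ [HP [HD1 _]]] Hct [Dc1 Dc2].
  set (f := fun u w => F (u, w)).
  rewrite (surjective_pairing (c t)) in Hct |- *.
  set (x := fst (c t)) in *; set (y := snd (c t)) in *.
  assert (Hdiff : differentiable_pt_lim f x y (Defs.d1 F (x, y)) (Defs.d2 F (x, y))).
  { apply filterdiff_differentiable_pt_lim.
    eapply filterdiff_ext_lin.
    - apply (is_derive_filterdiff f x y (fun u w => Defs.d1 F (u, w)) (Defs.d2 F (x, y))).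
      + apply (locally_2d_locally (fun u w => is_derive (fun z => f z w) u (Defs.d1 F (u, w)))).
        apply (locally_2d_impl (fun u w => sq p d (u, w))); [|exact (locally_2d_sq p d x y Hct)].
        apply locally_2d_forall; intros u w Huw; apply Derive_correct, (HP (u, w) Huw).
      + apply Derive_correct, (HP (x, y) Hct).
      + apply continuous_ext with (Defs.d1 F); [intros [u w]; reflexivity|exact (HD1 (x, y) Hct)].
    - intros [u w]; reflexivity. }
  apply is_derive_ext with (fun s => f (fst (c s)) (snd (c s))).
  { intros s; unfold f; rewrite <- surjective_pairing; reflexivity. }
  apply is_derive_Reals, (derivable_pt_lim_comp_2d f _ _ t _ _ (fst v) (snd v)); [exact Hdiff| |];
    apply is_derive_Reals; assumption.
Qed.

Lemma continuity_pt_dir_deriv (F : R * R -> R) (p : R * R) (d : R) (c w : R -> R * R) (t : R) :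
  Ck2 1 F (sq p d) -> sq p d (c t) ->
  continuity_pt (fun s => fst (c s)) t -> continuity_pt (fun s => snd (c s)) t ->
  continuity_pt (fun s => fst (w s)) t -> continuity_pt (fun s => snd (w s)) t ->
  continuity_pt (fun s => dir_deriv F (c s) (w s)) t.
Proof.
  intros [_ [_ [HD1 HD2]]] Hct Hc1 Hc2 Hw1 Hw2.
  assert (Hcomp : forall G, (forall q, sq p d q -> continuous G q) ->
            continuity_pt (fun s => G (c s)) t).
  { intros G HG.
    apply continuity_pt_ext with (fun s => G (fst (c s), snd (c s)));
      [intros s; rewrite <- surjective_pairing; reflexivity|].
    apply continuity_pt_filterlim.
    apply (continuous_comp_2 (fun s => fst (c s)) (fun s => snd (c s)) (fun u v => G (u, v)));
      try (apply continuity_pt_filterlim; assumption).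
    apply continuous_ext with G; [intros [u v]; reflexivity|].
    rewrite <- surjective_pairing; exact (HG _ Hct). }
  unfold dir_deriv; apply continuity_pt_plus; apply continuity_pt_mult;
    [apply Hcomp; exact HD1|exact Hw1|apply Hcomp; exact HD2|exact Hw2].
Qed.

Lemma Derive_neq0_of_left_inverse (phi phiinv : R -> R) (x : R) :
  ex_derive phi x -> ex_derive phiinv (phi x) ->
  locally x (fun t => phiinv (phi t) = t) -> Derive phi x <> 0.
Proof.
  intros Hphi Hinv Hloc E.
  assert (Hcomp : is_derive (fun t => phiinv (phi t)) x (Derive phi x * Derive phiinv (phi x))).
  { eapply is_derive_eq_value; [apply (is_derive_comp phiinv phi x); apply Derive_correct; eassumption|].
    reflexivity. }
  assert (Hid : is_derive (fun t => phiinv (phi t)) x 1).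
  { apply is_derive_ext_loc with (fun t => t); [|apply (@is_derive_id R_AbsRing)].
    apply (filter_imp _ _ (fun t Ht => eq_sym Ht)), Hloc. }
  rewrite E, Rmult_0_l in Hcomp.
  pose proof (is_derive_unique _ _ _ Hcomp) as E0; rewrite (is_derive_unique _ _ _ Hid) in E0; lra.
Qed.

(* Differentiating chi (psi (p + s v)) = p + s v at s = 0 recovers v from Dpsi(p) v. *)
Lemma dir_deriv_injective (psi chi : R * R -> R * R) (p : R * R) (d : R) (v : R * R) :
  0 < d ->
  Ck2 1 (fun x => fst (psi x)) (sq p d) -> Ck2 1 (fun x => snd (psi x)) (sq p d) ->
  Ck2 1 (fun y => fst (chi y)) (sq (psi p) d) -> Ck2 1 (fun y => snd (chi y)) (sq (psi p) d) ->
  (forall x, sq p d x -> chi (psi x) = x) ->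
  dir_deriv (fun x => fst (psi x)) p v = 0 -> dir_deriv (fun x => snd (psi x)) p v = 0 ->
  v = (0, 0).
Proof.
  intros Hd Hpsi1 Hpsi2 Hchi1 Hchi2 Hchi_psi Hv1 Hv2.
  set (c := fun s => (fst p + s * fst v, snd p + s * snd v)).
  assert (Hc0 : c 0 = p) by (unfold c; rewrite !Rmult_0_l, !Rplus_0_r; symmetry; apply surjective_pairing).
  assert (Hsqp : sq p d p) by (apply sq_center, Hd).
  assert (Hdc : forall s, is_derive_curve c s v) by (intros s; split; simpl; auto_derive; trivial; ring).
  set (w := fun s => psi (c s)).
  assert (Hdw : is_derive_curve w 0 (0, 0)).
  { assert (Hsqc0 : sq p d (c 0)) by (rewrite Hc0; exact Hsqp).
    split; eapply is_derive_eq_value.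
    - exact (is_derive_comp_Ck2 (fun x => fst (psi x)) p d c 0 v Hpsi1 Hsqc0 (Hdc 0)).
    - rewrite Hc0; exact Hv1.
    - exact (is_derive_comp_Ck2 (fun x => snd (psi x)) p d c 0 v Hpsi2 Hsqc0 (Hdc 0)).
    - rewrite Hc0; exact Hv2. }
  assert (Hw0 : w 0 = psi p) by (unfold w; rewrite Hc0; reflexivity).
  assert (Hsqw : sq (psi p) d (w 0)).
  { rewrite Hw0; apply sq_center, Hd. }
  assert (Hloc : locally 0 (fun s => chi (w s) = c s)).
  { apply (filter_imp (fun s => sq p d (c s))); [intros s Hs; apply Hchi_psi, Hs|].
    apply locally_sq_of_continuity; [| |rewrite Hc0; exact Hsqp];
      apply continuity_pt_filterlim, (@ex_derive_continuous R_AbsRing R_NormedModule);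
      eexists; apply (Hdc 0). }
  destruct (Hdc 0) as [Dc1 Dc2].
  assert (Hzero : forall G, Ck2 1 G (sq (psi p) d) -> is_derive (fun s => G (w s)) 0 0).
  { intros G HG; eapply is_derive_eq_value; [exact (is_derive_comp_Ck2 G _ _ w 0 _ HG Hsqw Hdw)|].
    unfold dir_deriv; simpl; ring. }
  assert (Hc1 : is_derive (fun s => fst (c s)) 0 0).
  { apply (is_derive_ext_loc (fun s => fst (chi (w s)))); [|exact (Hzero _ Hchi1)].
    apply (filter_imp _ _ (fun s Hs => f_equal fst Hs)), Hloc. }
  assert (Hc2 : is_derive (fun s => snd (c s)) 0 0).
  { apply (is_derive_ext_loc (fun s => snd (chi (w s)))); [|exact (Hzero _ Hchi2)].
    apply (filter_imp _ _ (fun s Hs => f_equal snd Hs)), Hloc. }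
  apply is_derive_unique in Dc1, Dc2, Hc1, Hc2.
  destruct v as [v1 v2]; simpl in *; f_equal; congruence.
Qed.

Section CuspGerm.

Variables (n : nat) (a b d : R) (gamma nu : R -> R * R) (phi phiinv : R -> R)
  (psi chi : R * R -> R * R).
Hypothesis Hn : (1 <= n)%nat.
Hypothesis Hab : a < 0 < b.
Hypothesis HL : legendre_immersion a b gamma nu.
Hypothesis Hd : 0 < d.
Hypothesis Hphi0 : phi 0 = 0.
Hypothesis Hphi : smooth_on (ival (- d) d) phi.
Hypothesis Hphiinv : smooth_on (ival (- d) d) phiinv.
Hypothesis Hphiinv_phi : forall t, ival (- d) d t -> phiinv (phi t) = t.
Hypothesis Hpsi0 : psi (gamma 0) = Cusp n 0.
Hypothesis Hpsi : smooth22_on (sq (gamma 0) d) psi.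
Hypothesis Hchi : smooth22_on (sq (Cusp n 0) d) chi.
Hypothesis Hchi_psi : forall x, sq (gamma 0) d x -> chi (psi x) = x.
Hypothesis Hpsi_gamma : forall t, ival a b t -> ival (- d) d t -> psi (gamma t) = Cusp n (phi t).

Definition cusp_domain (s : R) : Prop := ival a b s /\ ival (- d) d s /\ sq (gamma 0) d (gamma s).

Definition dpsi_mu (pr : R * R -> R) (t : R) : R :=
  dir_deriv (fun x => pr (psi x)) (gamma t) (mu_of nu t).

Lemma Derive_phi_0_neq0 : Derive phi 0 <> 0.
Proof.
  assert (Hd0 : ival (- d) d 0) by (unfold ival; lra).
  apply Derive_neq0_of_left_inverse with phiinv.
  - exact (ex_derive_of_smooth_on _ _ _ Hphi Hd0).
  - rewrite Hphi0; exact (ex_derive_of_smooth_on _ _ _ Hphiinv Hd0).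
  - exact (filter_imp _ _ Hphiinv_phi (open_ival _ _ 0 Hd0)).
Qed.

Lemma dpsi_mu_0_neq0 : dpsi_mu fst 0 <> 0 \/ dpsi_mu snd 0 <> 0.
Proof.
  destruct (Req_dec (dpsi_mu fst 0) 0) as [Z1|Z1]; [|left; exact Z1].
  destruct (Req_dec (dpsi_mu snd 0) 0) as [Z2|Z2]; [|right; exact Z2].
  exfalso; destruct HL as (_ & _ & _ & _ & Hunit & _).
  assert (Hmu : mu_of nu 0 = (0, 0)).
  { rewrite <- Hpsi0 in Hchi.
    apply (dir_deriv_injective psi chi (gamma 0) d); try assumption;
      [exact (proj1 Hpsi 1%nat)|exact (proj2 Hpsi 1%nat)
      |exact (proj1 Hchi 1%nat)|exact (proj2 Hchi 1%nat)]. }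
  assert (Hnu0 := Hunit 0 ltac:(unfold ival; lra)).
  rewrite <- (dot_Mpow 1) in Hnu0; change (Mpow 1 (nu 0)) with (mu_of nu 0) in Hnu0.
  rewrite Hmu in Hnu0; unfold dot in Hnu0; simpl in Hnu0; lra.
Qed.

Lemma locally_cusp_domain : locally 0 cusp_domain.
Proof.
  unfold cusp_domain; destruct HL as (Hg1 & Hg2 & _).
  assert (H0 : ival a b 0) by (unfold ival; lra).
  apply filter_and; [exact (open_ival a b 0 H0)|].
  apply filter_and; [apply open_ival; unfold ival; lra|].
  apply locally_sq_of_continuity; try (apply (continuity_pt_of_smooth_on (ival a b)); assumption).
  apply sq_center, Hd.
Qed.

(* Both sides are the derivative of s |-> pr (psi (gamma s)) = phi(s)^k at t. *)
Lemma beta0_mul_dpsi_mu (pr : R * R -> R) (k : nat) (t : R) :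
  (forall x, pr (Cusp n x) = x ^ k) -> Ck2 1 (fun x => pr (psi x)) (sq (gamma 0) d) ->
  locally t cusp_domain -> beta0 gamma nu t * dpsi_mu pr t = INR k * Derive phi t * phi t ^ pred k.
Proof.
  intros Hpr HF Hloc.
  destruct (locally_singleton _ _ Hloc) as (Hta & Htd & Hts).
  destruct HL as (Hg1 & Hg2 & _).
  assert (Hchain : is_derive (fun s => pr (psi (gamma s))) t (beta0 gamma nu t * dpsi_mu pr t)).
  { eapply is_derive_eq_value.
    - apply (is_derive_comp_Ck2 (fun x => pr (psi x)) _ _ gamma t (dcurve gamma t) HF Hts).
      apply is_derive_curve_dcurve; apply (ex_derive_of_smooth_on (ival a b)); assumption.
    - rewrite (dcurve_gamma a b gamma nu HL t Hta); unfold dpsi_mu, dir_deriv, vscal; simpl; ring. }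
  assert (Hcusp : is_derive (fun s => pr (psi (gamma s))) t (INR k * Derive phi t * phi t ^ pred k)).
  { apply is_derive_ext_loc with (fun s => phi s ^ k).
    - generalize Hloc; apply filter_imp; intros s (Hsa & Hsd & _).
      rewrite (Hpsi_gamma s Hsa Hsd); symmetry; apply Hpr.
    - apply is_derive_pow, Derive_correct, (ex_derive_of_smooth_on (ival (- d) d)); assumption. }
  rewrite <- (is_derive_unique _ _ _ Hchain); exact (is_derive_unique _ _ _ Hcusp).
Qed.

Lemma is_lim_dpsi_mu (pr : R * R -> R) :
  Ck2 1 (fun x => pr (psi x)) (sq (gamma 0) d) -> is_lim (dpsi_mu pr) 0 (dpsi_mu pr 0).
Proof.
  destruct HL as (Hg1 & Hg2 & Hn1 & Hn2 & _); intros HF.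
  apply is_lim_continuity, (continuity_pt_dir_deriv _ (gamma 0) d); [exact HF|apply sq_center, Hd| | | |];
    simpl; try apply continuity_pt_opp; apply (continuity_pt_of_smooth_on (ival a b));
    try assumption; unfold ival; lra.
Qed.

Lemma is_lim_phi_div_id : is_lim (fun t => phi t / t) 0 (Derive phi 0).
Proof.
  apply is_lim_ext with (fun t => phi t / t ^ 1); [intros t; rewrite pow_1; reflexivity|].
  replace (Derive phi 0) with (Derive_n phi 1 0 / INR (fact 1)) by (simpl; rewrite Rdiv_1_r; reflexivity).
  apply (is_lim_div_pow_Derive_n (- d) d); [lra|exact Hphi|].
  intros j Hj; replace j with 0%nat by lia; exact Hphi0.
Qed.

Lemma locally'_beta0_div_pow :
  locally' 0 (fun t =>
    beta0 gamma nu t / t ^ (n - 1) * dpsi_mu fst t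
      = INR n * Derive phi t * (phi t / t) ^ (n - 1) /\
    beta0 gamma nu t / t ^ (n - 1) * dpsi_mu snd t
      = INR (S n) * Derive phi t * (phi t / t) ^ (n - 1) * phi t).
Proof.
  unfold locally', within.
  generalize (locally_locally _ _ locally_cusp_domain); apply filter_imp; intros t Hloc Ht0.
  assert (HtN : t ^ (n - 1) <> 0) by (apply pow_nonzero; exact Ht0).
  assert (Hq : (phi t / t) ^ (n - 1) = phi t ^ (n - 1) / t ^ (n - 1))
    by (unfold Rdiv; rewrite Rpow_mult_distr, pow_inv; reflexivity).
  pose proof (beta0_mul_dpsi_mu fst n t (fun x => eq_refl) (proj1 Hpsi 1%nat) Hloc) as E1.
  pose proof (beta0_mul_dpsi_mu snd (S n) t (fun x => eq_refl) (proj2 Hpsi 1%nat) Hloc) as E2.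
  replace (pred n) with (n - 1)%nat in E1 by lia.
  replace (pred (S n)) with (S (n - 1)) in E2 by lia.
  rewrite Hq; split.
  - replace (beta0 gamma nu t / t ^ (n - 1) * dpsi_mu fst t)
      with (beta0 gamma nu t * dpsi_mu fst t / t ^ (n - 1)) by (field; exact HtN).
    rewrite E1; field; exact HtN.
  - replace (beta0 gamma nu t / t ^ (n - 1) * dpsi_mu snd t)
      with (beta0 gamma nu t * dpsi_mu snd t / t ^ (n - 1)) by (field; exact HtN).
    rewrite E2; simpl; field; exact HtN.
Qed.

Lemma zero_of_order_beta0 : zero_of_order (beta0 gamma nu) (n - 1).
Proof.
  set (D := Derive phi 0).
  assert (HDphi : is_lim (Derive phi) 0 D).
  { apply is_lim_continuity, (continuity_pt_of_smooth_on (ival (- d) d));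
      [now apply smooth_on_Derive|unfold ival; lra]. }
  assert (Hphi_lim : is_lim phi 0 0).
  { rewrite <- Hphi0 at 2; apply is_lim_continuity, (continuity_pt_of_smooth_on (ival (- d) d));
      [exact Hphi|unfold ival; lra]. }
  assert (HX : is_lim (fun t => INR n * Derive phi t * (phi t / t) ^ (n - 1)) 0 (INR n * D * D ^ (n - 1))).
  { apply is_lim_Rmult; [apply is_lim_Rmult; [apply is_lim_const|exact HDphi]|].
    apply is_lim_Rpow, is_lim_phi_div_id. }
  apply (is_lim_nonzero_of_scal (fun t => beta0 gamma nu t / t ^ (n - 1)) (dpsi_mu fst) (dpsi_mu snd) _
           (fun t => INR (S n) * Derive phi t * (phi t / t) ^ (n - 1) * phi t)
           _ _ _ (INR (S n) * D * D ^ (n - 1) * 0)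
           (is_lim_dpsi_mu fst (proj1 Hpsi 1%nat)) (is_lim_dpsi_mu snd (proj2 Hpsi 1%nat)) HX).
  - apply is_lim_Rmult; [|exact Hphi_lim].
    apply is_lim_Rmult; [apply is_lim_Rmult; [apply is_lim_const|exact HDphi]|].
    apply is_lim_Rpow, is_lim_phi_div_id.
  - exact dpsi_mu_0_neq0.
  - assert (HD := Derive_phi_0_neq0); fold D in HD.
    apply Rmult_integral_contrapositive_currified; [|apply pow_nonzero; exact HD].
    apply Rmult_integral_contrapositive_currified; [apply not_0_INR; lia|exact HD].
  - exact locally'_beta0_div_pow.
Qed.

End CuspGerm.

Theorem mainTheorem3 (n : nat) (a b : R) (gamma nu : R -> R * R) :
  (2 <= n)%nat ->
  a < 0 < b ->
  legendre_immersion a b gamma nu ->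
  (forall t, ival a b t -> ell nu t <> 0) ->
  A_equivalent_at0 a b gamma (Cusp n) ->
  (forall k : nat, (1 <= k <= n - 2)%nat -> singular_point (Ev gamma nu k) 0) /\
  regular_point (Ev gamma nu (n - 1)) 0.
Proof.
  intros Hn Hab HL Hell HA.
  assert (H0 : ival a b 0) by (unfold ival; lra).
  assert (Hbeta : zero_of_order (beta0 gamma nu) (n - 1)).
  { destruct HA as (d & phi & phiinv & psi & chi & Hd & Hphi0 & Hphi & Hphiinv & Hinv & _ &
                    Hpsi0 & Hpsi & Hchi & Hchi_psi & _ & Heq).
    exact (zero_of_order_beta0 n a b d gamma nu phi phiinv psi chi ltac:(lia) Hab HL Hd
             Hphi0 Hphi Hphiinv Hinv Hpsi0 Hpsi Hchi Hchi_psi Heq). }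
  assert (Hsmooth := smooth_on_betak a b gamma nu HL Hell).
  split.
  - intros k Hk; apply (singular_point_Ev_iff a b gamma nu HL Hell k 0 H0).
    assert (Hord : zero_of_order (betak gamma nu k) (S (n - 2 - k))).
    { apply (zero_of_order_betak a b gamma nu HL Hell); [exact Hab|].
      replace (k + S (n - 2 - k))%nat with (n - 1)%nat by lia; exact Hbeta. }
    apply (zero_of_order_Derive_n a b _ _ Hab (Hsmooth k)) in Hord as [Hz _].
    exact (Hz 0%nat (Nat.lt_0_succ _)).
  - intros Hsing; apply (singular_point_Ev_iff a b gamma nu HL Hell (n - 1) 0 H0) in Hsing.
    assert (Hord : zero_of_order (betak gamma nu (n - 1)) 0).
    { apply (zero_of_order_betak a b gamma nu HL Hell); [exact Hab|].
      rewrite Nat.add_0_r; exact Hbeta. }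
    apply (zero_of_order_Derive_n a b _ _ Hab (Hsmooth (n - 1)%nat)) in Hord as [_ Hnz].
    exact (Hnz Hsing).
Qed.
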